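(* Let $\mathcal{H}$ be a hypertree. Then the edges of $Comp(\mathcal{H})$ are exactly the nonempty subsets of $V(\mathcal{H})$ that induce a subtree of every host tree of $\mathcal{H}$. Additionally, if $\mathcal{H}'$ is a hypertree equivalent to $\mathcal{H}$, then $E(Simp(\mathcal{H}'))\subseteq E(Comp(\mathcal{H}))$.
   Context: A hypergraph $\mathcal{H}$ has a finite vertex set $V(\mathcal{H})$ and a finite family $E(\mathcal{H})$ (repetitions allowed) of nonempty subsets (edges). A host tree of $\mathcal{H}$ is a tree with vertex set $V(\mathcal{H})$ in which every edge induces a connected subgraph; $\mathcal{H}$ is a hypertree if it has one. Two hypergraphs on the same vertex set are equivalent if they have the same host trees. $Simp(\mathcal{H})$ is obtained from $\mathcal{H}$ by deleting repeated edges. A union of sets is connected if the intersection graph of the sets is connected. $Comp(\mathcal{H})$ is the hypergraph without repeated edges on $V(\mathcal{H})$ whose edges are $V(\mathcal{H})$, all one-element subsets, and all proper subsets of $V(\mathcal{H})$ obtainable from edges of $\mathcal{H}$ by repeated nonempty intersections and connected unions. *)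

From mathcomp Require Import all_boot.
Set Implicit Arguments. Unset Strict Implicit. Unset Printing Implicit Defensive.

Section Hyper.
Variable V : finType.

Definition restr {T : finType} (S : {set T}) (e : rel T) : rel T :=
  fun x y => [&& x \in S, y \in S & e x y].

Definition connected_on {T : finType} (S : {set T}) (e : rel T) : Prop :=
  forall x y, x \in S -> y \in S -> connect (restr S e) x y.

(* The subgraph of e induced by S has no cycle (cycle = >= 3 distinct vertices). *)
Definition acyclic_on (S : {set V}) (e : rel V) : Prop :=
  forall c : seq V, ucycle (restr S e) c -> size c <= 2.

Definition is_tree_on (S : {set V}) (e : rel V) : Prop :=
  [/\ S != set0, connected_on S e & acyclic_on S e].

Definition is_graph (e : rel V) : Prop := symmetric e /\ irreflexive e.

Definition hypergraph (E : seq {set V}) : Prop := all (fun A => A != set0) E.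

Definition host_tree (E : seq {set V}) (T : rel V) : Prop :=
  [/\ is_graph T, is_tree_on setT T & forall A, A \in E -> connected_on A T].

Definition hypertree (E : seq {set V}) : Prop := exists T, host_tree E T.

Definition equivalent (E E' : seq {set V}) : Prop :=
  forall T, host_tree E T <-> host_tree E' T.

Inductive obtainable (E : seq {set V}) : {set V} -> Prop :=
| obt_edge A : A \in E -> obtainable E A
| obt_inter (F : {set {set V}}) : F != set0 -> (forall A, A \in F -> obtainable E A) ->
    \bigcap_(A in F) A != set0 -> obtainable E (\bigcap_(A in F) A)
| obt_union (F : {set {set V}}) : F != set0 -> (forall A, A \in F -> obtainable E A) ->
    connected_on F (fun A B => A :&: B != set0) -> obtainable E (\bigcup_(A in F) A).

(* Edges of Comp(H) (as a set, no repetitions). *)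
Definition comp_edge (E : seq {set V}) (S : {set V}) : Prop :=
  S = setT \/ (exists x, S = [set x]) \/ (S \proper setT /\ obtainable E S).

End Hyper.

From mathcomp Require Import all_boot.

Set Implicit Arguments.
Unset Strict Implicit.
Unset Printing Implicit Defensive.

(* Obtainable sets induce subtrees of every host tree: in a tree, intersections
   of subtrees are subtrees, and connected unions of connected sets are
   connected.  Conversely, let S induce a subtree of every host tree and fix a
   host tree T.  For an edge uv of T inside S, the intersection of all
   hyperedges containing u and v lies in S: a vertex x outside S in it lies on
   one side of uv in T - uv, and replacing uv by an edge from x to the other
   side yields a host tree (every hyperedge through u and v contains x) in
   which S is disconnected.  Hence S is the connected union of these
   obtainable intersections over the edges of T inside S.  An edge of an
   equivalent hypertree is connected in every host tree of H, so it is an edge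
   of Comp(H) by the first part. *)

Section Restriction.
Variable T : finType.
Implicit Types (e : rel T) (A B : {set T}).

Lemma restrT e : restr setT e =2 e.
Proof. by move=> x y; rewrite /restr !in_setT. Qed.

Lemma restr_sym A e : symmetric e -> symmetric (restr A e).
Proof. by move=> sy x y; rewrite /restr sy andbCA. Qed.

Lemma sub_restr A e : subrel (restr A e) e.
Proof. by move=> x y /and3P[]. Qed.

Lemma path_restr A e x s :
  x \in A -> all [in A] s -> path e x s -> path (restr A e) x s.
Proof.
elim: s x => [|y s IHs] x //= xA /andP[yA sA] /andP[exy ps].
by rewrite /restr xA yA exy IHs.
Qed.

Lemma connect_restr_subset A B e x y :
  A \subset B -> connect (restr A e) x y -> connect (restr B e) x y.
Proof.
move=> sAB; apply: connect_sub => p q /and3P[pA qA epq]; apply: connect1.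
by rewrite /restr (subsetP sAB _ pA) (subsetP sAB _ qA) epq.
Qed.

Lemma connected_on_neighbor A e z :
  1 < #|A| -> connected_on A e -> z \in A -> exists2 w, w \in A & e z w.
Proof.
case/card_gt1P=> x [y [xA yA xy]] cA zA.
have [t tA zt] : exists2 t, t \in A & z != t.
  by case: (eqVneq z x) => [zx|]; [exists y; rewrite ?zx | exists x].
case/connectP: (cA z t zA tA) => [[|w p]] /=; first by move=> _ tz; rewrite -tz eqxx in zt.
by case/andP=> /and3P[_ wA ezw] _ _; exists w.
Qed.

Lemma connected_bigcup e (F : {set {set T}}) :
  (forall A, A \in F -> connected_on A e) ->
  connected_on F (fun A B => A :&: B != set0) -> connected_on (\bigcup_(A in F) A) e.
Proof.
move=> cF cFF x y /bigcupP[A AF xA] /bigcupP[B BF yB].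
case/connectP: (cFF A B AF BF) => p; elim: p A AF x xA => [|C p IHp] A AF x xA /=.
  move=> _ eqBA; rewrite eqBA in yB.
  by apply: connect_restr_subset (cF A AF x y xA yB); apply: bigcup_sup.
case/andP=> /and3P[_ CF /set0Pn[z /setIP[zA zC]]] pC lastB.
apply: connect_trans (IHp C CF z zC pC lastB).
by apply: connect_restr_subset (cF A AF x z xA zA); apply: bigcup_sup.
Qed.

End Restriction.

Section Trees.
Variable V : finType.
Implicit Types (e f : rel V) (S A B : {set V}).

Definition on_pair (u v x y : V) : bool :=
  ((x == u) && (y == v)) || ((x == v) && (y == u)).

Definition del_edge e (u v : V) : rel V := fun x y => e x y && ~~ on_pair u v x y.

Definition add_edge e (a b : V) : rel V := fun x y => e x y || on_pair a b x y.

Lemma on_pairC u v x y : on_pair u v x y = on_pair v u x y.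
Proof. by rewrite /on_pair orbC. Qed.

Lemma on_pair_sym u v x y : on_pair u v x y = on_pair u v y x.
Proof. by rewrite /on_pair orbC andbC [(y == v) && _]andbC. Qed.

Lemma on_pairxx u v : on_pair u v u v.
Proof. by rewrite /on_pair !eqxx. Qed.

Lemma path_not_on_pair u v x s :
  u \notin x :: s -> path (fun p q => ~~ on_pair u v p q) x s.
Proof.
elim: s x => [|y s IHs] x //; rewrite !inE !negb_or => /and3P[ux uy us] /=.
rewrite IHs ?inE ?negb_or ?uy // andbT /on_pair.
by rewrite ![_ == u]eq_sym (negbTE ux) (negbTE uy) andbF.
Qed.

Lemma path_del_edge e u v x s :
  u \notin x :: s -> path e x s -> path (del_edge e u v) x s.
Proof.
move=> /(path_not_on_pair v) nu pe.
by have := path_relI e (fun p q => ~~ on_pair u v p q) x s; rewrite pe nu.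
Qed.

Lemma path_add_edge e a b x s :
  a \notin x :: s -> path (add_edge e a b) x s -> path e x s.
Proof.
move=> /(path_not_on_pair b) na pe.
have := path_relI (add_edge e a b) (fun p q => ~~ on_pair a b p q) x s.
by rewrite pe na; apply: sub_path => p q /andP[/orP[] // ab /negP[]].
Qed.

Lemma del_edge_sym e u v : symmetric e -> symmetric (del_edge e u v).
Proof. by move=> sy x y; rewrite /del_edge sy on_pair_sym. Qed.

Lemma del_edgeC e u v : del_edge e u v =2 del_edge e v u.
Proof. by move=> x y; rewrite /del_edge on_pairC. Qed.

Lemma add_edge_sym e a b : symmetric e -> symmetric (add_edge e a b).
Proof. by move=> sy x y; rewrite /add_edge sy on_pair_sym. Qed.

Lemma ucycle_restrT e c : ucycle (restr setT e) c = ucycle e c.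
Proof. by rewrite /ucycle (eq_cycle (restrT e)). Qed.

Lemma acyclic_on_sub S1 S2 f e :
  S1 \subset S2 -> subrel f e -> acyclic_on S2 e -> acyclic_on S1 f.
Proof.
move=> sS fe ac c /andP[cc uc]; apply: ac; rewrite /ucycle uc andbT.
apply: sub_cycle cc => x y /and3P[xS yS fxy].
by rewrite /restr (subsetP sS _ xS) (subsetP sS _ yS) fe.
Qed.

Lemma tree_on_connected e S :
  acyclic_on setT e -> S != set0 -> connected_on S e -> is_tree_on S e.
Proof. by move=> ac S0 cS; split=> //; apply: acyclic_on_sub ac. Qed.

Section AcyclicGraph.
Variable e : rel V.
Hypotheses (ge : is_graph e) (ac : acyclic_on setT e).

Lemma acyclic_edge_cut u v : e u v -> ~ connect (del_edge e u v) u v.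
Proof.
have [sy ir] := ge; move=> euv /connectP[p pp vl]; rewrite vl in euv; move: euv vl.
case: (shortenP pp) => {pp}p pp up _ euv vl.
have : ucycle (restr setT e) (u :: p).
  rewrite ucycle_restrT /ucycle up andbT /= rcons_path sy euv andbT.
  by apply: sub_path pp => x y /andP[].
move/ac; case: p pp up euv vl => [|w [|]] //=; first by rewrite ir.
by move=> /andP[/andP[_ nuw] _] _ _ vw _; rewrite vw on_pairxx in nuw.
Qed.

Lemma acyclic_upath_in_connected B x p :
  connected_on B e -> path e x p -> uniq (x :: p) -> x \in B -> last x p \in B ->
  all [in B] p.
Proof.
move=> cB; elim: p x => [|w p IHp] x //= /andP[exw pp] /andP[xp up] xB lB.
have [wB|wB] := boolP (w \in B); first by rewrite /= (IHp w).
case: (acyclic_edge_cut exw).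
have x_last : connect (del_edge e x w) x (last w p).
  apply: connect_sub (cB _ _ xB lB) => a b /and3P[aB bB eab]; apply: connect1.
  rewrite /del_edge eab /on_pair.
  by apply/negP=> /orP[] /andP[/eqP ? /eqP ?]; subst a b; rewrite (negbTE wB) in aB bB.
apply: connect_trans x_last _.
rewrite (sym_connect_sym (del_edge_sym x w (proj1 ge))).
by apply/connectP; exists p => //; apply: path_del_edge.
Qed.

Lemma connected_bigcap (F : {set {set V}}) :
  F != set0 -> (forall A, A \in F -> connected_on A e) ->
  connected_on (\bigcap_(A in F) A) e.
Proof.
move=> /set0Pn[A0 A0F] cF x y /bigcapP xF /bigcapP yF.
case/connectP: (cF A0 A0F x y (xF _ A0F) (yF _ A0F)) => p pp yl.
move: yF; rewrite yl; case: (shortenP pp) => {pp yl}q qp uq _ yF.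
have qe := sub_path (@sub_restr _ A0 e) qp.
apply/connectP; exists q => //; apply: (path_restr _ _ qe); first exact/bigcapP.
apply/allP=> z zq; apply/bigcapP=> A AF.
by have /allP := acyclic_upath_in_connected (cF A AF) qe uq (xF _ AF) (yF _ AF); apply.
Qed.

End AcyclicGraph.

Lemma ucycle_add_edge_notin f a b c :
  a \notin c -> ucycle (add_edge f a b) c -> ucycle f c.
Proof.
case: c => [|x p] // anc /andP[cc uc]; rewrite /ucycle uc andbT /= (path_add_edge _ cc) //.
by rewrite -rcons_cons mem_rcons inE orbA orbb -in_cons.
Qed.

Lemma acyclic_add_edge f a b :
  symmetric f -> acyclic_on setT f -> ~ connect f a b -> acyclic_on setT (add_edge f a b).
Proof.
move=> sy ac nab c; rewrite ucycle_restrT leqNgt => ucc; apply/negP => c3.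
have acf c' : ucycle f c' -> size c' <= 2 by move=> uc'; apply: ac; rewrite ucycle_restrT.
have [ca|anc] := boolP (a \in c); last first.
  by move: c3; rewrite ltnNge (acf _ (ucycle_add_edge_notin anc ucc)).
(* Rotated to start at a, the cycle can use the new edge only as its first or last step. *)
case/rot_to: ca => i q rq.
have : ucycle (add_edge f a b) (a :: q) by rewrite -rq rot_ucycle.
have : 2 < size (a :: q) by rewrite -rq size_rot.
case: q {rq} => [|y r] // r1.
rewrite /ucycle /= rcons_path !inE negb_or => /andP[/and3P[eay pyr eza]].
case/and3P=> /andP[ay ar] yr ur.
have zr : last y r \in r.
  by case: r r1 {pyr eza ar yr ur} => // r0 r' _; exact: (mem_last r0 r').
set z := last y r in eza zr.
have [za zy] : z != a /\ z != y by split; apply: contraTneq zr => ->.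
have pfy : path f y r by apply: path_add_edge pyr; rewrite inE negb_or ay.
have fyz : connect f y z by apply/connectP; exists r.
move: eay eza; rewrite /add_edge /on_pair !eqxx (negbTE za) [y == a]eq_sym (negbTE ay).
rewrite !andbF !orbF andbT /= => /orP[fay | /eqP yb] /orP[fza | /eqP zb].
- have : size [:: a, y & r] <= 2; last by rewrite leqNgt r1.
  by apply: acf; rewrite /ucycle /= rcons_path fay pfy fza !inE negb_or ay ar yr ur.
- by apply: nab; rewrite -zb; apply: connect_trans (connect1 fay) fyz.
- by apply: nab; rewrite (sym_connect_sym sy) -yb; apply: connect_trans fyz (connect1 fza).
- by rewrite zb yb eqxx in zy.
Qed.

End Trees.

Section Exchange.
Variable V : finType.
Implicit Types (e : rel V) (S A : {set V}).

Lemma eq_restr A e f : e =2 f -> restr A e =2 restr A f.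
Proof. by move=> ef x y; rewrite /restr ef. Qed.

Lemma restr_del_edge A e u v : restr A (del_edge e u v) =2 del_edge (restr A e) u v.
Proof. by move=> x y; rewrite /restr /del_edge !andbA. Qed.

Lemma del_edge_sides e u v w : connected_on setT e ->
  connect (del_edge e u v) u w \/ connect (del_edge e u v) v w.
Proof.
move=> cT; set d := del_edge e u v.
suff side_last x p : connect d u x \/ connect d v x -> path e x p ->
    connect d u (last x p) \/ connect d v (last x p).
  case/connectP: (cT u w (in_setT u) (in_setT w)) => p.
  by rewrite (eq_path (restrT e)) => pp ->; apply: side_last pp; left.
elim: p x => //= z p IHp x x_side /andP[exz pz]; apply: IHp pz.
have [|nxz] := boolP (on_pair u v x z).
  by case/orP=> /andP[_ /eqP ->]; [right | left].
have dxz : d x z by rewrite /d /del_edge exz.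
by case: x_side => s; [left | right]; apply: connect_trans s (connect1 dxz).
Qed.

Lemma connect_restr_del_edge e A u v w :
  symmetric e -> ~ connect (del_edge e u v) u v -> connect (del_edge e u v) u w ->
  u \in A -> w \in A -> connected_on A e -> connect (restr A (del_edge e u v)) u w.
Proof.
move=> sy nuv uw uA wA cA.
case/connectP: (cA u w uA wA) => p pp wl; rewrite wl in uw *; move: uw; clear wl.
case: (shortenP pp) => {pp}q qp uq _ uw.
apply/connectP; exists q => //; rewrite (eq_path (restr_del_edge A e u v)).
case: q qp uq uw => [|z q] //= /andP[euz pq] /andP[uzq _] uw.
have zv : z != v.
  apply/eqP=> zv; apply: nuv; apply: connect_trans uw _.
  rewrite (sym_connect_sym (del_edge_sym u v sy)) -zv; apply/connectP; exists q => //.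
  exact: path_del_edge uzq (sub_path (@sub_restr _ A e) pq).
rewrite path_del_edge // andbT /del_edge euz /on_pair eqxx (negbTE zv) /=.
by apply: contraNN uzq => /andP[_ /eqP <-]; apply: mem_head.
Qed.

Section EdgeExchange.
Variables (E : seq {set V}) (e : rel V) (u v a b : V).
Hypotheses (hE : host_tree E e) (euv : e u v).
Hypotheses (ua : connect (del_edge e u v) u a) (vb : connect (del_edge e u v) v b).

Local Notation e' := (add_edge (del_edge e u v) a b).

Let sy : symmetric e. Proof. by case: hE => -[]. Qed.

Let nuv : ~ connect (del_edge e u v) u v.
Proof. by case: hE => ge [_ _ ac] _; apply: acyclic_edge_cut. Qed.

Lemma exchange_cut : ~ connect (del_edge e u v) a b.
Proof.
have cs := sym_connect_sym (del_edge_sym u v sy).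
by move=> ab; apply: nuv; apply: connect_trans ua _; apply: connect_trans ab _; rewrite cs.
Qed.

Lemma exchange_is_graph : is_graph e'.
Proof.
have [[_ ir] _ _] := hE; split; first exact/add_edge_sym/del_edge_sym.
move=> x; rewrite /add_edge /del_edge ir /on_pair /=.
apply/negP=> /orP[] /andP[/eqP xa /eqP xb]; apply: exchange_cut;
  by rewrite -xa -xb connect0.
Qed.

Lemma exchange_connected : connected_on setT e'.
Proof.
have [_ [_ cT _] _] := hE.
have del_e' : subrel (del_edge e u v) e' by move=> x y dxy; rewrite /add_edge dxy.
have ue'v : connect e' u v.
  apply: connect_trans (connect_sub _ ua) _; first by move=> x y /del_e' /connect1.
  apply: connect_trans (connect1 (_ : e' a b)) _; first by rewrite /add_edge on_pairxx orbT.
  rewrite (sym_connect_sym (add_edge_sym a b (del_edge_sym u v sy))).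
  by apply: connect_sub vb => x y /del_e' /connect1.
move=> x y _ _; rewrite (eq_connect (restrT e')).
move: (cT x y (in_setT x) (in_setT y)); rewrite (eq_connect (restrT e)).
apply: connect_sub => p q epq; have [|npq] := boolP (on_pair u v p q).
  case/orP=> /andP[/eqP -> /eqP ->] //.
  by rewrite (sym_connect_sym (add_edge_sym a b (del_edge_sym u v sy))).
by apply/connect1/del_e'; rewrite /del_edge epq.
Qed.

Lemma exchange_acyclic : acyclic_on setT e'.
Proof.
have [_ [_ _ ac] _] := hE; apply: acyclic_add_edge exchange_cut.
  exact: del_edge_sym.
by apply: acyclic_on_sub ac => // x y /andP[].
Qed.

Lemma exchange_disconnects S :
  u \in S -> v \in S -> (a \notin S) || (b \notin S) -> ~ connected_on S e'.
Proof.
move=> uS vS nab cS; apply: nuv; apply: connect_sub (cS u v uS vS) => p q.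
case/and3P=> pS qS /orP[dpq | /orP[] /andP[/eqP pa /eqP qb]]; first exact: connect1.
all: by move: nab; rewrite -pa -qb pS qS.
Qed.

Hypothesis hab : forall A, A \in E -> u \in A -> v \in A -> (a \in A) && (b \in A).

Lemma exchange_hyperedge_connected A : A \in E -> connected_on A e'.
Proof.
have [_ _ cE] := hE; move=> AE x y xA yA.
have d_e' : subrel (restr A (del_edge e u v)) (restr A e').
  by move=> p q /and3P[pA qA dpq]; rewrite /restr pA qA /add_edge dpq.
apply: connect_sub (cE A AE x y xA yA) => p q /and3P[pA qA epq].
have [opq|npq] := boolP (on_pair u v p q); last first.
  by apply/connect1/d_e'; rewrite /restr pA qA /del_edge epq npq.
have [uA vA] : u \in A /\ v \in A by case/orP: opq => /andP[/eqP <- /eqP <-].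
have /andP[aA bA] := hab AE uA vA.
have d_e'_connect : subrel (connect (restr A (del_edge e u v))) (connect (restr A e')).
  by apply: connect_sub => p' q' /d_e' /connect1.
have u_a : connect (restr A e') u a.
  exact/d_e'_connect/(connect_restr_del_edge sy nuv ua uA aA (cE A AE)).
have v_b : connect (restr A e') v b.
  apply: d_e'_connect; rewrite -(eq_connect (eq_restr A (del_edgeC e v u))).
  apply: connect_restr_del_edge vA bA (cE A AE) => //;
    rewrite (eq_connect (del_edgeC e v u)) //.
  by rewrite (sym_connect_sym (del_edge_sym u v sy)).
have a_b : restr A e' a b by rewrite /restr aA bA /add_edge on_pairxx orbT.
have cs := sym_connect_sym (restr_sym A (add_edge_sym a b (del_edge_sym u v sy))).
have u_v : connect (restr A e') u v.
  by apply: connect_trans u_a (connect_trans (connect1 a_b) _); rewrite cs.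
by case/orP: opq => /andP[/eqP -> /eqP ->]; last rewrite cs.
Qed.

Lemma host_tree_exchange : host_tree E e'.
Proof.
split; [exact: exchange_is_graph | split | exact: exchange_hyperedge_connected].
- by apply/set0Pn; exists u.
- exact: exchange_connected.
- exact: exchange_acyclic.
Qed.

End EdgeExchange.
End Exchange.

Section Hypergraph.
Variable V : finType.
Implicit Types (E : seq {set V}) (e T : rel V) (S A : {set V}).

Lemma obtainable_neq0 E S : hypergraph E -> obtainable E S -> S != set0.
Proof.
move=> hE; elim=> [A /(allP hE) // | F _ _ _ _ // | F /set0Pn[A AF] _ IH _].
case/set0Pn: (IH A AF) => x xA; apply/set0Pn; exists x.
by apply/bigcupP; exists A.
Qed.

Lemma obtainable_connected E e S : host_tree E e -> obtainable E S -> connected_on S e.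
Proof.
case=> ge [_ _ ac] cE; elim=> [A /cE // | F F0 _ cF _ | F _ _ cF cFF].
  exact: (connected_bigcap ge ac F0 cF).
exact: (connected_bigcup cF cFF).
Qed.

Lemma comp_edge_subtree E S : hypergraph E -> hypertree E -> comp_edge E S ->
  S != set0 /\ forall T, host_tree E T -> is_tree_on S T.
Proof.
move=> hE [T0 hT0] cS.
have S0 : S != set0.
  case: cS => [-> | [[x ->] | [_ /(obtainable_neq0 hE) //]]]; first by have [_ []] := hT0.
  by apply/set0Pn; exists x; rewrite inE.
split=> // T hT; have [_ [_ cT ac] _] := hT; apply: tree_on_connected => //.
case: cS => [-> | [[x ->] | [_ oS]]]; [exact: cT | | exact: obtainable_connected oS].
by move=> y z /set1P -> /set1P ->.
Qed.

Definition pair_hull E (u v : V) : {set V} :=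
  \bigcap_(A in [set A in E | (u \in A) && (v \in A)]) A.

Lemma pair_hullP E u v x :
  reflect (forall A, A \in E -> u \in A -> v \in A -> x \in A) (x \in pair_hull E u v).
Proof.
apply: (iffP bigcapP) => [hx A AE uA vA | hx A].
  by apply: hx; rewrite inE AE uA vA.
by rewrite inE => /andP[AE /andP[uA vA]]; apply: hx.
Qed.

Lemma pair_hull_l E u v : u \in pair_hull E u v.
Proof. by apply/pair_hullP. Qed.

Lemma pair_hull_r E u v : v \in pair_hull E u v.
Proof. by apply/pair_hullP. Qed.

Lemma pair_hull_obtainable E u v :
  pair_hull E u v != setT -> obtainable E (pair_hull E u v).
Proof.
move=> hullT; apply: obt_inter.
- by apply: contraNneq hullT => F0; rewrite /pair_hull F0 big_set0.
- by move=> A; rewrite inE => /andP[AE _]; apply: obt_edge.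
- by apply/set0Pn; exists u; apply: pair_hull_l.
Qed.

Lemma pair_hull_subset E e S u v : host_tree E e ->
  (forall T, host_tree E T -> connected_on S T) ->
  u \in S -> v \in S -> e u v -> pair_hull E u v \subset S.
Proof.
move=> he cS uS vS euv; apply/subsetP => x /pair_hullP hx; apply/negPn/negP => xS.
suff [a [b [hT' abS]]] : exists a b,
    host_tree E (add_edge (del_edge e u v) a b) /\ (a \notin S) || (b \notin S).
  by apply: (exchange_disconnects he euv uS vS abS); apply: cS.
have [_ [_ cT _] _] := he.
case: (del_edge_sides u v x cT) => side; [exists x, v | exists u, x].
- split; last by rewrite xS.
  by apply: host_tree_exchange he euv side (connect0 _ v) _ => A AE uA vA; rewrite hx.
- split; last by rewrite xS orbT.
  by apply: host_tree_exchange he euv (connect0 _ u) side _ => A AE uA vA; rewrite uA hx.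
Qed.

Section HullCover.
Variables (E : seq {set V}) (S : {set V}) (T0 : rel V).
Hypotheses (hT0 : host_tree E T0) (cS : forall T, host_tree E T -> connected_on S T).
Hypotheses (S_gt1 : 1 < #|S|) (S_proper : S \proper setT).

Definition hull_cover : {set {set V}} := [set pair_hull E u v | u in S, v in S & T0 u v].

Local Notation meets := (fun A B : {set V} => A :&: B != set0).

Lemma hull_coverP X : reflect
  (exists u v, [/\ u \in S, v \in S, T0 u v & X = pair_hull E u v]) (X \in hull_cover).
Proof.
apply: (iffP imset2P) => [[u v uS] | [u [v [uS vS euv ->]]]].
  by rewrite inE => /andP[vS euv] ->; exists u, v.
by exists u v; rewrite ?inE ?vS.
Qed.

Lemma mem_hull_cover u v : u \in S -> v \in S -> T0 u v -> pair_hull E u v \in hull_cover.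
Proof. by move=> uS vS euv; apply/hull_coverP; exists u, v. Qed.

Lemma hull_cover_sub X : X \in hull_cover -> X \subset S.
Proof.
by case/hull_coverP=> u [v [uS vS euv ->]]; apply: pair_hull_subset hT0 cS uS vS euv.
Qed.

Lemma hull_cover_obtainable X : X \in hull_cover -> obtainable E X.
Proof.
move=> XH; have XS := hull_cover_sub XH.
case/hull_coverP: XH XS => u [v [_ _ _ ->]] XS.
apply: pair_hull_obtainable; apply: contraTneq S_proper => hullT.
by rewrite properT negbK eqEsubset subsetT -hullT.
Qed.

Lemma bigcup_hull_cover : \bigcup_(X in hull_cover) X = S.
Proof.
apply/eqP; rewrite eqEsubset; apply/andP; split; first by apply/bigcupsP=> X /hull_cover_sub.
apply/subsetP=> z zS; have [w wS ezw] := connected_on_neighbor S_gt1 (cS hT0) zS.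
by apply/bigcupP; exists (pair_hull E z w); [apply: mem_hull_cover | apply: pair_hull_l].
Qed.

Lemma hull_cover_walk z p X Y : path (restr S T0) z p ->
  X \in hull_cover -> Y \in hull_cover -> z \in X -> last z p \in Y ->
  connect (restr hull_cover meets) X Y.
Proof.
elim: p z X => [|w p IHp] z X /=.
  move=> _ XH YH zX zY; apply: connect1; rewrite /restr XH YH.
  by apply/set0Pn; exists z; rewrite inE zX.
case/andP=> /and3P[zS wS ezw] pp XH YH zX lY.
have HH := mem_hull_cover zS wS ezw.
apply: connect_trans (IHp _ _ pp HH YH (pair_hull_r E z w) lY).
apply: connect1; rewrite /restr XH HH.
by apply/set0Pn; exists z; rewrite inE zX pair_hull_l.
Qed.

Lemma hull_cover_connected : connected_on hull_cover meets.
Proof.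
move=> X Y XH YH.
case/hull_coverP: (XH) => u1 [v1 [u1S _ _ XE]]; case/hull_coverP: (YH) => u2 [v2 [u2S _ _ YE]].
case/connectP: (cS hT0 u1S u2S) => p pp lp.
by apply: (hull_cover_walk pp) => //; rewrite ?XE -?lp ?YE pair_hull_l.
Qed.

Lemma subtree_obtainable : obtainable E S.
Proof.
rewrite -bigcup_hull_cover; apply: obt_union.
- case/card_gt0P: (ltnW S_gt1) => z zS.
  have [w wS ezw] := connected_on_neighbor S_gt1 (cS hT0) zS.
  by apply/set0Pn; exists (pair_hull E z w); apply: mem_hull_cover.
- exact: hull_cover_obtainable.
- exact: hull_cover_connected.
Qed.

End HullCover.

Lemma subtree_comp_edge E S : hypertree E -> S != set0 ->
  (forall T, host_tree E T -> connected_on S T) -> comp_edge E S.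
Proof.
move=> [T0 hT0] S0 cS; have [ST | ST] := eqVneq S setT; first by left.
have [/cards1P S1 | S1] := boolP (#|S| == 1); first by right; left.
right; right; split; first by rewrite properT.
apply: subtree_obtainable hT0 cS _ _; last by rewrite properT.
by rewrite ltn_neqAle eq_sym S1 card_gt0.
Qed.

End Hypergraph.

Theorem mainTheorem5 (V : finType) (E : seq {set V}) :
  hypergraph E -> hypertree E ->
  (forall S : {set V},
     comp_edge E S <-> (S != set0 /\ forall T, host_tree E T -> is_tree_on S T)) /\
  (forall E' : seq {set V}, hypergraph E' -> hypertree E' -> equivalent E E' ->
     forall A, A \in E' -> comp_edge E A).
Proof.
move=> hE hT; split=> [S | E' hE' _ eqE A AE'].
  split; first exact: comp_edge_subtree.
  by case=> S0 tS; apply: subtree_comp_edge => // T /tS [].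
apply: subtree_comp_edge => //; first exact: (allP hE').
by move=> T /eqE [_ _ cE']; apply: cE'.
Qed.
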